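(* Assume the vector variational inequality defined by $F$ and $K$ is monotone. (i) If $\mathcal{A}$ and $\mathcal{B}$ are two different connected components of $\mathrm{Sol}^w(F,K)$, then $S^{-1}(\mathcal{A})\cap S^{-1}(\mathcal{B})=\emptyset$. (ii) If $\mathcal{A}$ and $\mathcal{B}$ are two different connected components of $\mathrm{Sol}^{pr}(F,K)$, then $\{\xi\in\operatorname{ri}\Delta: S(\xi)\cap\mathcal{A}\neq\emptyset\}\cap\{\xi\in\operatorname{ri}\Delta: S(\xi)\cap\mathcal{B}\neq\emptyset\}=\emptyset$.
   Context: Let $K\subset\mathbb{R}^n$ be a nonempty closed convex set and $F_1,\dots,F_m:K\to\mathbb{R}^n$ continuous functions; write $F=(F_1,\dots,F_m)$ and $F(x)(u)=(\langle F_1(x),u\rangle,\dots,\langle F_m(x),u\rangle)$. The problem is monotone if each $F_l$ is monotone on $K$: $\langle F_l(y)-F_l(x),y-x\rangle\ge0$ for all $x,y\in K$. Let $\Delta=\{\xi\in\mathbb{R}^m_+ : \sum_l\xi_l=1\}$, $\operatorname{ri}\Delta=\{\xi\in\Delta:\xi_l>0,\ l=1,\dots,m\}$, and $F_\xi=\sum_l\xi_lF_l$. For $G:K\to\mathbb{R}^n$, $\mathrm{Sol}(G,K)=\{x\in K:\langle G(x),y-x\rangle\ge0\ \forall y\in K\}$. The weak Pareto solution set $\mathrm{Sol}^w(F,K)$ is the set of $x\in K$ with $F(x)(x-y)\notin\operatorname{int}\mathbb{R}^m_+$ for all $y\in K$; it is known that $\mathrm{Sol}^w(F,K)=\bigcup_{\xi\in\Delta}\mathrm{Sol}(F_\xi,K)$.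 The proper Pareto solution set is $\mathrm{Sol}^{pr}(F,K)=\bigcup_{\xi\in\operatorname{ri}\Delta}\mathrm{Sol}(F_\xi,K)$. The basic multifunction is $S(\xi)=\mathrm{Sol}(F_\xi,K)$ for $\xi\in\Delta$, and $S^{-1}(\mathcal{A})=\{\xi\in\Delta:S(\xi)\cap\mathcal{A}\ne\emptyset\}$. *)

From mathcomp Require Import all_boot.
From Stdlib Require Import Reals.
Set Implicit Arguments. Unset Strict Implicit.
Open Scope R_scope.

Definition vec (n : nat) := 'I_n -> R.

Definition vsub n (x y : vec n) : vec n := fun i => x i - y i.
Definition vadd n (x y : vec n) : vec n := fun i => x i + y i.
Definition vscale n (t : R) (x : vec n) : vec n := fun i => t * x i.

Definition inner n (x y : vec n) : R := \big[Rplus/0]_(i < n) (x i * y i).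
Definition vdist n (x y : vec n) : R := sqrt (inner (vsub x y) (vsub x y)).

Definition vclosed n (K : vec n -> Prop) : Prop :=
  forall x, (forall eps, 0 < eps -> exists y, K y /\ vdist x y < eps) -> K x.
Definition vconvex n (K : vec n -> Prop) : Prop :=
  forall x y t, K x -> K y -> 0 <= t <= 1 ->
    K (vadd (vscale t x) (vscale (1 - t) y)).

Definition vcontinuous_on n (K : vec n -> Prop) (G : vec n -> vec n) : Prop :=
  forall x, K x -> forall eps, 0 < eps -> exists delta, 0 < delta /\
    forall y, K y -> vdist x y < delta -> vdist (G x) (G y) < eps.

Definition vmonotone_on n (K : vec n -> Prop) (G : vec n -> vec n) : Prop :=
  forall x y, K x -> K y -> 0 <= inner (vsub (G y) (G x)) (vsub y x).

Definition vopen_in n (A U : vec n -> Prop) : Prop :=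
  forall x, A x -> U x -> exists eps, 0 < eps /\
    forall y, A y -> vdist x y < eps -> U y.

Definition vconnected n (A : vec n -> Prop) : Prop :=
  forall U V, vopen_in A U -> vopen_in A V ->
    (forall x, A x -> U x \/ V x) ->
    (exists x, A x /\ U x) -> (exists x, A x /\ V x) ->
    exists x, A x /\ U x /\ V x.

Definition vconn_component n (X C : vec n -> Prop) : Prop :=
  (forall x, C x -> X x) /\ (exists x, C x) /\ vconnected C /\
  forall D, (forall x, D x -> X x) -> vconnected D -> (forall x, C x -> D x) ->
    forall x, D x -> C x.

Definition same_set n (A B : vec n -> Prop) : Prop := forall x, A x <-> B x.

Definition simplex m (xi : 'I_m -> R) : Prop :=
  (forall l, 0 <= xi l) /\ \big[Rplus/0]_(l < m) xi l = 1.
Definition ri_simplex m (xi : 'I_m -> R) : Prop :=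
  simplex xi /\ forall l, 0 < xi l.

Definition Fxi n m (F : 'I_m -> vec n -> vec n) (xi : 'I_m -> R) : vec n -> vec n :=
  fun x i => \big[Rplus/0]_(l < m) (xi l * F l x i).

Definition Sol n (G : vec n -> vec n) (K : vec n -> Prop) (x : vec n) : Prop :=
  K x /\ forall y, K y -> 0 <= inner (G x) (vsub y x).

Definition Sol_w n m (F : 'I_m -> vec n -> vec n) (K : vec n -> Prop) (x : vec n) : Prop :=
  K x /\ forall y, K y -> ~ (forall l, 0 < inner (F l x) (vsub x y)).

Definition Sol_pr n m (F : 'I_m -> vec n -> vec n) (K : vec n -> Prop) (x : vec n) : Prop :=
  exists xi, ri_simplex xi /\ Sol (Fxi F xi) K x.

Definition S_map n m (F : 'I_m -> vec n -> vec n) (K : vec n -> Prop) (xi : 'I_m -> R) :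
  vec n -> Prop := Sol (Fxi F xi) K.
Definition S_inv n m (F : 'I_m -> vec n -> vec n) (K : vec n -> Prop) (A : vec n -> Prop)
  (xi : 'I_m -> R) : Prop :=
  simplex xi /\ exists x, S_map F K xi x /\ A x.

(* For fixed weights xi in the simplex, F_xi is continuous and monotone, so by
   Minty's lemma Sol(F_xi, K) coincides with the set of z in K satisfying
   <F_xi w, w - z> >= 0 for all w in K, which is an intersection of
   half-spaces; hence S(xi) is convex and in particular connected.  S(xi) lies
   in Sol^w(F, K), and in Sol^pr(F, K) when xi is in ri Delta.  A connected
   subset of a space that meets two connected components forces them to
   coincide, so no xi can be in both preimages. *)
From HB Require Import structures.
From mathcomp Require Import all_boot.
From Stdlib Require Import Reals Lra Classical FunctionalExtensionality.
Open Scope R_scope.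
Set Implicit Arguments. Unset Strict Implicit.

Lemma Rplus_assoc' : associative Rplus. Proof. by move=> *; lra. Qed.
Lemma Rmult_assoc' : associative Rmult. Proof. by move=> *; ring. Qed.
Lemma Rmult_0_l' : left_zero 0 Rmult. Proof. by move=> x; lra. Qed.
Lemma Rmult_0_r' : right_zero 0 Rmult. Proof. by move=> x; lra. Qed.
HB.instance Definition _ :=
  Monoid.isComLaw.Build R 0 Rplus Rplus_assoc' Rplus_comm Rplus_0_l.
HB.instance Definition _ :=
  Monoid.isComLaw.Build R 1 Rmult Rmult_assoc' Rmult_comm Rmult_1_l.
HB.instance Definition _ := Monoid.isMulLaw.Build R 0 Rmult Rmult_0_l' Rmult_0_r'.
HB.instance Definition _ :=
  Monoid.isAddLaw.Build R Rmult Rplus Rmult_plus_distr_r Rmult_plus_distr_l.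

Section FiniteSums.
Variable I : finType.
Implicit Types f g : I -> R.

Lemma sumR_opp f : \big[Rplus/0]_i (- f i) = - \big[Rplus/0]_i f i.
Proof. by rewrite (big_morph Ropp (id1 := 0) (op1 := Rplus)) //; [move=> x y | ]; lra. Qed.

Lemma sumR_ge0 f : (forall i, 0 <= f i) -> 0 <= \big[Rplus/0]_i f i.
Proof. by move=> f0; apply: (big_ind (fun x => 0 <= x)) => // [|x y]; lra. Qed.

Lemma sumR_le f g : (forall i, f i <= g i) ->
  \big[Rplus/0]_i f i <= \big[Rplus/0]_i g i.
Proof. by move=> fg; apply: (big_ind2 (fun x y => x <= y)) => // *; lra. Qed.

Lemma sumR_term_le f j : (forall i, 0 <= f i) -> f j <= \big[Rplus/0]_i f i.
Proof.
move=> f0; rewrite (bigD1 j) //=.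
have rest_ge0 : 0 <= \big[Rplus/0]_(i | i != j) f i.
  by rewrite big_mkcond; apply: sumR_ge0 => i; case: ifP => _; [apply: f0 | lra].
lra.
Qed.

Lemma sumR_abs_le f : Rabs (\big[Rplus/0]_i f i) <= \big[Rplus/0]_i Rabs (f i).
Proof.
apply: (big_ind2 (fun x y => Rabs x <= y)) => [|x1 x2 y1 y2 h1 h2|i _].
- by rewrite Rabs_R0; lra.
- by have := Rabs_triang x1 y1; lra.
- by lra.
Qed.

End FiniteSums.

Section InnerProduct.
Variable n : nat.
Implicit Types u v w d : vec n.

Lemma inner_linear_l u v1 v2 d a b :
  (forall i, u i = a * v1 i + b * v2 i) -> inner u d = a * inner v1 d + b * inner v2 d.
Proof.
move=> uE; rewrite /inner !big_distrr -big_split /=.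
by apply: eq_bigr => i _; rewrite uE; ring.
Qed.

Lemma inner_linear_r u w d1 d2 a b :
  (forall i, w i = a * d1 i + b * d2 i) -> inner u w = a * inner u d1 + b * inner u d2.
Proof.
move=> wE; rewrite /inner !big_distrr -big_split /=.
by apply: eq_bigr => i _; rewrite wE; ring.
Qed.

Lemma inner_vsub_l u v d : inner (vsub u v) d = inner u d - inner v d.
Proof. by rewrite (@inner_linear_l _ u v d 1 (-1)) => [|i]; rewrite /vsub; ring. Qed.

Lemma inner_vsub_swap u v w : inner u (vsub v w) = - inner u (vsub w v).
Proof. by rewrite (@inner_linear_r u _ (vsub w v) (vsub w v) (-1) 0) => [|i]; rewrite /vsub; ring. Qed.

Lemma inner_self_ge0 u : 0 <= inner u u.
Proof. by apply: sumR_ge0 => i; nra. Qed.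

Lemma vdist_sym u v : vdist u v = vdist v u.
Proof. by rewrite /vdist /inner; f_equal; apply: eq_bigr => i _; rewrite /vsub; ring. Qed.

Lemma vdist_collinear u v d c :
  (forall i, vsub u v i = c * d i) -> vdist u v = Rabs c * sqrt (inner d d).
Proof.
move=> uvE; rewrite /vdist.
have -> : inner (vsub u v) (vsub u v) = (c * c) * inner d d.
  by rewrite /inner big_distrr; apply: eq_bigr => i _ /=; rewrite uvE; ring.
by rewrite sqrt_mult ?sqrt_Rsqr_abs //; [nra | apply: inner_self_ge0].
Qed.

Lemma inner_le_norm_l1 u d :
  Rabs (inner u d) <= sqrt (inner u u) * \big[Rplus/0]_i Rabs (d i).
Proof.
apply: Rle_trans (sumR_abs_le _) _; rewrite big_distrr; apply: sumR_le => i /=.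
have coord_le : Rabs (u i) <= sqrt (inner u u).
  rewrite -sqrt_Rsqr_abs; apply: sqrt_le_1_alt; rewrite /Rsqr /inner.
  by apply: (@sumR_term_le _ (fun j => u j * u j)) => j; nra.
by rewrite Rabs_mult; have := Rabs_pos (d i); have := Rabs_pos (u i); nra.
Qed.

End InnerProduct.

(** * Connectedness *)

Lemma interval_connected (P Q : R -> Prop) :
  (forall t, 0 <= t <= 1 -> P t \/ Q t) ->
  (forall t, 0 <= t <= 1 -> P t -> exists d, 0 < d /\
     forall s, 0 <= s <= 1 -> Rabs (s - t) < d -> P s) ->
  (forall t, 0 <= t <= 1 -> Q t -> exists d, 0 < d /\
     forall s, 0 <= s <= 1 -> Rabs (s - t) < d -> Q s) ->
  P 0 -> Q 1 -> exists t, 0 <= t <= 1 /\ P t /\ Q t.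
Proof.
move=> PQ Popen Qopen P0 Q1; apply: NNPP => noPQ.
have disj t : 0 <= t <= 1 -> P t -> Q t -> False by move=> *; apply: noPQ; exists t.
(* [c] is the supremum of the initial segments of [0,1] contained in [P]. *)
pose E t := 0 <= t <= 1 /\ forall s, 0 <= s <= t -> P s.
have E0 : E 0 by split=> [|s s0]; [lra | have -> : s = 0 by lra].
have Ebound : bound E by exists 1 => t [[_ t1] _].
have [c [c_ub c_lub]] := completeness E Ebound (ex_intro _ 0 E0).
have c01 : 0 <= c <= 1 by split; [apply: c_ub | apply: c_lub => t [] []].
have P_below s : 0 <= s < c -> P s.
  move=> s_lt; apply: NNPP => nPs; suff : c <= s by lra.
  by apply: c_lub => t [_ Pt]; apply: Rnot_lt_le => ts; apply: nPs; apply: Pt; lra.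
case: (PQ c c01) => [Pc | Qc].
- have [d [d0 Pd]] := Popen c c01 Pc.
  have c1 : c <> 1 by move=> c1; apply: (disj c) => //; rewrite c1.
  pose t := Rmin 1 (c + d / 2).
  have t_gt : c < t by apply: Rmin_glb_lt; lra.
  have t_le1 : t <= 1 := Rmin_l _ _.
  have t_le : t <= c + d / 2 := Rmin_r _ _.
  suff : t <= c by lra.
  apply: c_ub; split=> [|s s_le]; first lra.
  case: (Rlt_le_dec s c) => sc; first by apply: P_below; lra.
  by apply: Pd; [lra | rewrite Rabs_right; lra].
- have c0 : c <> 0 by move=> c0; apply: (disj 0); [lra | | rewrite -c0].
  have [d [d0 Qd]] := Qopen c c01 Qc.
  pose s := Rmax 0 (c - d / 2).
  have s_lt : s < c by apply: Rmax_lub_lt; lra.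
  have s_ge0 : 0 <= s := Rmax_l _ _.
  have s_ge : c - d / 2 <= s := Rmax_r _ _.
  apply: (disj s); [lra | apply: P_below; lra | apply: Qd; first lra].
  by rewrite Rabs_left; lra.
Qed.

Section Segments.
Variable n : nat.

Definition seg (a b : vec n) (t : R) : vec n := vadd (vscale t b) (vscale (1 - t) a).

Lemma vdist_seg a b t s :
  vdist (seg a b t) (seg a b s) = Rabs (t - s) * sqrt (inner (vsub b a) (vsub b a)).
Proof. by apply: vdist_collinear => i; rewrite /vsub /seg /vadd /vscale; ring. Qed.

Lemma vopen_in_seg (C U : vec n -> Prop) a b :
  vopen_in C U -> (forall t, 0 <= t <= 1 -> C (seg a b t)) ->
  forall t, 0 <= t <= 1 -> U (seg a b t) -> exists d, 0 < d /\
    forall s, 0 <= s <= 1 -> Rabs (s - t) < d -> U (seg a b s).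
Proof.
move=> Uopen Cseg t t01 Ut.
have [e [e0 Ue]] := Uopen _ (Cseg t t01) Ut.
set D := sqrt (inner (vsub b a) (vsub b a)); have D0 : 0 <= D by apply: sqrt_pos.
exists (e / (D + 1)); split=> [|s s01 st]; first by apply: Rdiv_lt_0_compat; lra.
apply: Ue; first exact: Cseg.
rewrite vdist_seg -/D Rabs_minus_sym.
have : e / (D + 1) * (D + 1) = e by field; lra.
have := Rmult_lt_compat_r (D + 1) _ _ ltac:(lra) st.
by have := Rabs_pos (s - t); nra.
Qed.

Lemma vconvex_connected (C : vec n -> Prop) : vconvex C -> vconnected C.
Proof.
move=> Cconv U V Uopen Vopen UV [a [Ca Ua]] [b [Cb Vb]].
have Cseg t : 0 <= t <= 1 -> C (seg a b t) by move=> t01; apply: Cconv.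
have seg0 : seg a b 0 = a by apply: functional_extensionality => i; rewrite /seg /vadd /vscale; ring.
have seg1 : seg a b 1 = b by apply: functional_extensionality => i; rewrite /seg /vadd /vscale; ring.
have [t [t01 [Ut Vt]]] := @interval_connected (fun t => U (seg a b t)) (fun t => V (seg a b t))
  (fun t t01 => UV _ (Cseg t t01)) (vopen_in_seg Uopen Cseg) (vopen_in_seg Vopen Cseg)
  ltac:(by rewrite /= seg0) ltac:(by rewrite /= seg1).
by exists (seg a b t); split; [apply: Cseg |].
Qed.

End Segments.

Section Components.
Variable n : nat.
Implicit Types A B D X U : vec n -> Prop.

Lemma vopen_in_sub A B U : (forall x, A x -> B x) -> vopen_in B U -> vopen_in A U.
Proof.
move=> AB Uopen x Ax Ux; have [e [e0 Ue]] := Uopen x (AB x Ax) Ux.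
by exists e; split=> // y Ay; apply: Ue; apply: AB.
Qed.

Lemma vconnected_union A B p :
  vconnected A -> vconnected B -> A p -> B p -> vconnected (fun x => A x \/ B x).
Proof.
move=> Aconn Bconn Ap Bp U V Uopen Vopen UV [x [ABx Ux]] [y [ABy Vy]].
have meet C : vconnected C -> (forall x, C x -> A x \/ B x) ->
    (exists z, C z /\ U z) -> (exists z, C z /\ V z) ->
    exists z, (A z \/ B z) /\ U z /\ V z.
  move=> Cconn CAB CU CV.
  have [z [Cz UVz]] := Cconn U V (vopen_in_sub CAB Uopen) (vopen_in_sub CAB Vopen)
    (fun z Cz => UV z (CAB z Cz)) CU CV.
  by exists z; split; [apply: CAB|].
have inA z : A z -> A z \/ B z by left.
have inB z : B z -> A z \/ B z by right.
(* Whichever of [U], [V] contains [p], the piece through the witness of the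
   other open set meets both. *)
have [Up | Vp] := UV p (or_introl Ap).
- case: ABy => [Ay | By].
  + by apply: (meet A) => //; [exists p | exists y].
  + by apply: (meet B) => //; [exists p | exists y].
- case: ABx => [Ax | Bx].
  + by apply: (meet A) => //; [exists x | exists p].
  + by apply: (meet B) => //; [exists x | exists p].
Qed.

Lemma vconn_component_meet X A B D :
  vconn_component X A -> vconn_component X B ->
  vconnected D -> (forall x, D x -> X x) ->
  (exists x, D x /\ A x) -> (exists x, D x /\ B x) -> same_set A B.
Proof.
move=> [AX [_ [Aconn Amax]]] [BX [_ [Bconn Bmax]]] Dconn DX [a [Da Aa]] [b [Db Bb]].
have ADBconn : vconnected (fun x => (A x \/ D x) \/ B x).
  exact: vconnected_union (vconnected_union Aconn Dconn Aa Da) Bconn (or_intror Db) Bb.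
have ADBX x : (A x \/ D x) \/ B x -> X x by case=> [[]|]; auto.
move=> x; split=> hx.
- by apply: (Bmax _ ADBX ADBconn); [move=> y; right | left; left].
- by apply: (Amax _ ADBX ADBconn); [move=> y; left; left | right].
Qed.

End Components.

(** * Minty's lemma *)

Section Minty.
Variables (n : nat) (K : vec n -> Prop) (G : vec n -> vec n).

(* Weaker than [vcontinuous_on], it is all the Minty argument uses and it
   passes directly to the weighted sums F_xi. *)
Definition inner_continuous_on : Prop :=
  forall z d, K z -> forall c, 0 < c -> exists del, 0 < del /\
    forall w, K w -> vdist z w < del -> Rabs (inner (vsub (G w) (G z)) d) < c.

Definition Minty_sol (z : vec n) : Prop :=
  K z /\ forall w, K w -> 0 <= inner (G w) (vsub w z).

Lemma vcontinuous_inner_continuous : vcontinuous_on K G -> inner_continuous_on.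
Proof.
move=> Gcont z d Kz c c0.
set M := \big[Rplus/0]_i Rabs (d i).
have M0 : 0 <= M by apply: sumR_ge0 => i; apply: Rabs_pos.
have [del [del0 Gdel]] := Gcont z Kz (c / (M + 1)) ltac:(apply: Rdiv_lt_0_compat; lra).
exists del; split=> // w Kw zw.
apply: Rle_lt_trans (inner_le_norm_l1 _ _) _; rewrite -/M.
have : sqrt (inner (vsub (G w) (G z)) (vsub (G w) (G z))) < c / (M + 1).
  by rewrite -/(vdist _ _) vdist_sym; apply: Gdel.
move=> /(Rmult_lt_compat_r (M + 1) _ _ ltac:(lra)).
have -> : c / (M + 1) * (M + 1) = c by field; lra.
by have := sqrt_pos (inner (vsub (G w) (G z)) (vsub (G w) (G z))); nra.
Qed.

Lemma Minty_sol_of_Sol : vmonotone_on K G -> forall z, Sol G K z -> Minty_sol z.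
Proof.
move=> Gmono z [Kz zsol]; split=> // w Kw.
by have := Gmono z w Kz Kw; have := zsol w Kw; rewrite inner_vsub_l; lra.
Qed.

Hypothesis Kconv : vconvex K.

Lemma Minty_sol_convex : vconvex Minty_sol.
Proof.
move=> x y t [Kx xsol] [Ky ysol] t01; split=> [|w Kw]; first exact: Kconv.
rewrite (@inner_linear_r _ _ _ (vsub w x) (vsub w y) t (1 - t)).
  by have := xsol w Kw; have := ysol w Kw; nra.
by move=> i; rewrite /vsub /vadd /vscale; ring.
Qed.

(* If <G z, y - z> < 0, continuity keeps <G w, y - z> < 0 for w on the
   segment [z, y] near z, whereas the Minty inequality at w says it is >= 0. *)
Lemma Sol_of_Minty_sol : inner_continuous_on -> forall z, Minty_sol z -> Sol G K z.
Proof.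
move=> Gcont z [Kz zminty]; split=> // y Ky; apply: Rnot_lt_le => neg.
set c := - inner (G z) (vsub y z).
have [del [del0 Gdel]] := Gcont z (vsub y z) Kz c ltac:(rewrite /c; lra).
set D := sqrt (inner (vsub z y) (vsub z y)); have D0 : 0 <= D by apply: sqrt_pos.
set s := Rmin (1 / 2) (del / (2 * (D + 1))).
have s0 : 0 < s by apply: Rmin_glb_lt; [lra | apply: Rdiv_lt_0_compat; lra].
have s_half : s <= 1 / 2 by apply: Rmin_l.
have s_del : s * (2 * (D + 1)) <= del.
  have s_le : s <= del / (2 * (D + 1)) by apply: Rmin_r.
  have := Rmult_le_compat_r (2 * (D + 1)) _ _ ltac:(lra) s_le.
  by have -> : del / (2 * (D + 1)) * (2 * (D + 1)) = del by field; lra.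
set w := vadd (vscale s y) (vscale (1 - s) z).
have Kw : K w by apply: Kconv => //; lra.
have zw : vdist z w < del.
  rewrite (@vdist_collinear _ z w (vsub z y) s); last first.
    by move=> i; rewrite /vsub /w /vadd /vscale; ring.
  by rewrite Rabs_right -/D; nra.
have w_nonneg : 0 <= inner (G w) (vsub y z).
  have := zminty w Kw.
  rewrite (@inner_linear_r _ _ _ (vsub y z) (vsub y z) s 0); first nra.
  by move=> i; rewrite /vsub /w /vadd /vscale; ring.
have := Gdel w Kw zw; rewrite inner_vsub_l.
by have := Rle_abs (inner (G w) (vsub y z) - inner (G z) (vsub y z)); rewrite /c; lra.
Qed.

Lemma Sol_convex : vmonotone_on K G -> inner_continuous_on -> vconvex (Sol G K).
Proof.
move=> Gmono Gcont x y t xsol ysol t01; apply: Sol_of_Minty_sol => //.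
by apply: Minty_sol_convex => //; apply: Minty_sol_of_Sol.
Qed.

End Minty.

(** * Scalarizations F_xi *)

Section Scalarization.
Variables (n m : nat) (K : vec n -> Prop) (F : 'I_m -> vec n -> vec n).

Lemma inner_Fxi xi x d :
  inner (Fxi F xi x) d = \big[Rplus/0]_(l < m) (xi l * inner (F l x) d).
Proof.
rewrite /inner /Fxi; under eq_bigr do rewrite big_distrl.
rewrite exchange_big; apply: eq_bigr => l _; rewrite big_distrr.
by apply: eq_bigr => i _ /=; ring.
Qed.

Lemma inner_vsub_Fxi xi x y d :
  inner (vsub (Fxi F xi y) (Fxi F xi x)) d =
  \big[Rplus/0]_(l < m) (xi l * inner (vsub (F l y) (F l x)) d).
Proof.
rewrite inner_vsub_l !inner_Fxi /Rminus -sumR_opp -big_split /=.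
by apply: eq_bigr => l _; rewrite inner_vsub_l; ring.
Qed.

Lemma Fxi_monotone xi : (forall l, 0 <= xi l) ->
  (forall l, vmonotone_on K (F l)) -> vmonotone_on K (Fxi F xi).
Proof.
move=> xi0 Fmono x y Kx Ky; rewrite inner_vsub_Fxi; apply: sumR_ge0 => l.
by have := Fmono l x y Kx Ky; have := xi0 l; nra.
Qed.

Lemma exists_common_delta (P : 'I_m -> R -> Prop) :
  (forall l d d', 0 < d' <= d -> P l d -> P l d') ->
  (forall l, exists d, 0 < d /\ P l d) -> exists d, 0 < d /\ forall l, P l d.
Proof.
move=> Pshrink Pex.
suff [d [d0 Pd]] : exists d, 0 < d /\ forall l, l \in enum 'I_m -> P l d.
  by exists d; split=> // l; apply: Pd; rewrite mem_enum.
elim: (enum 'I_m) => [|a s [d [d0 Pd]]]; first by exists 1; split=> //; lra.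
have [da [da0 Pda]] := Pex a.
have dmin : 0 < Rmin d da by apply: Rmin_glb_lt.
exists (Rmin d da); split=> // l; rewrite in_cons => /orP [/eqP -> | ls].
- by apply: (Pshrink a da) => //; split=> //; apply: Rmin_r.
- by apply: (Pshrink l d); [split=> //; apply: Rmin_l | apply: Pd].
Qed.

(* Each summand is made smaller than [c / 2]; since the weights sum to 1 the
   combination stays below [c / 2 < c]. *)
Lemma Fxi_inner_continuous xi : simplex xi ->
  (forall l, inner_continuous_on K (F l)) -> inner_continuous_on K (Fxi F xi).
Proof.
move=> [xi0 xi1] Fcont z d Kz c c0.
have [del [del0 Fdel]] := @exists_common_delta
  (fun l del => forall w, K w -> vdist z w < del ->
     Rabs (inner (vsub (F l w) (F l z)) d) < c / 2)
  ltac:(by move=> l d1 d2 d12 P w Kw zw; apply: P => //; lra)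
  ltac:(by move=> l; apply: Fcont => //; lra).
exists del; split=> // w Kw zw; rewrite inner_vsub_Fxi.
apply: Rle_lt_trans (sumR_abs_le _) _.
apply: (@Rle_lt_trans _ (\big[Rplus/0]_(l < m) (xi l * (c / 2)))); last first.
  by rewrite -big_distrl /= xi1; lra.
apply: sumR_le => l; rewrite Rabs_mult Rabs_right; last by have := xi0 l; lra.
by apply: Rmult_le_compat_l => //; apply: Rlt_le; apply: Fdel.
Qed.

(* If all <F_l x, x - y> were positive, their xi-average would be positive,
   contradicting x in Sol(F_xi, K); some weight is positive since they sum to 1. *)
Lemma Sol_Fxi_Sol_w xi x : simplex xi -> Sol (Fxi F xi) K x -> Sol_w F K x.
Proof.
move=> [xi0 xi1] [Kx xsol]; split=> // y Ky allpos.
have [j xj0] : exists j, 0 < xi j.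
  apply: NNPP => nopos; suff : \big[Rplus/0]_(l < m) xi l = 0 by lra.
  apply: big1 => l _; have := xi0 l.
  have : ~ 0 < xi l by move=> ?; apply: nopos; exists l.
  lra.
have := xsol y Ky; rewrite inner_Fxi.
have -> : \big[Rplus/0]_(l < m) (xi l * inner (F l x) (vsub y x)) =
          - \big[Rplus/0]_(l < m) (xi l * inner (F l x) (vsub x y)).
  by rewrite -sumR_opp; apply: eq_bigr => l _; rewrite inner_vsub_swap; ring.
have : xi j * inner (F j x) (vsub x y) <=
       \big[Rplus/0]_(l < m) (xi l * inner (F l x) (vsub x y)).
  by apply: (@sumR_term_le _ (fun l => _)) => l; have := xi0 l; have := allpos l; nra.
by have := allpos j; nra.
Qed.

Lemma S_map_connected xi : simplex xi -> vconvex K ->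
  (forall l, vcontinuous_on K (F l)) -> (forall l, vmonotone_on K (F l)) ->
  vconnected (S_map F K xi).
Proof.
move=> xis Kconv Fcont Fmono; apply: vconvex_connected; apply: Sol_convex => //.
- by apply: Fxi_monotone => //; case: xis.
- by apply: Fxi_inner_continuous => // l; apply: vcontinuous_inner_continuous.
Qed.

End Scalarization.

Theorem proposition2 (n m : nat) (K : vec n -> Prop) (F : 'I_m -> vec n -> vec n)
  (hKne : exists x, K x) (hKcl : vclosed K) (hKcv : vconvex K)
  (hFc : forall l, vcontinuous_on K (F l))
  (hmono : forall l, vmonotone_on K (F l)) :
  (forall A B : vec n -> Prop,
     vconn_component (Sol_w F K) A -> vconn_component (Sol_w F K) B ->
     ~ same_set A B ->
     forall xi, ~ (S_inv F K A xi /\ S_inv F K B xi)) /\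
  (forall A B : vec n -> Prop,
     vconn_component (Sol_pr F K) A -> vconn_component (Sol_pr F K) B ->
     ~ same_set A B ->
     forall xi, ~ ((ri_simplex xi /\ exists x, S_map F K xi x /\ A x) /\
                   (ri_simplex xi /\ exists x, S_map F K xi x /\ B x))).
Proof.
split=> A B Acomp Bcomp AneB xi [[xis [a [Sa Aa]]] [_ [b [Sb Bb]]]]; apply: AneB.
- apply: (vconn_component_meet Acomp Bcomp (S_map_connected xis hKcv hFc hmono)).
  + by move=> x; apply: Sol_Fxi_Sol_w.
  + by exists a.
  + by exists b.
- apply: (vconn_component_meet Acomp Bcomp (S_map_connected (proj1 xis) hKcv hFc hmono)).
  + by move=> x Sx; exists xi.
  + by exists a.
  + by exists b.
Qed.
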